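(* Let $\mathcal{A}:\mathbb{R}^{n_1\times n_2}\to\mathbb{R}^m$ be linear, $R\ge1$, $\alpha,\beta>0$, $\hat X=\sum_{r=1}^R\hat u^r(\hat v^r)^T$ with $\hat u^r\in\mathbb{R}^{n_1}$, $\hat v^r\in\mathbb{R}^{n_2}$, $\eta\in\mathbb{R}^m$ and $y=\mathcal{A}(\hat X)+\eta$. Let $(u^1_{\alpha,\beta},\dots,v^R_{\alpha,\beta})$ be a global minimizer of $J^R_{\alpha,\beta}$ and $X_{\alpha,\beta}=\sum_{r=1}^R u^r_{\alpha,\beta}(v^r_{\alpha,\beta})^T$. If $\|y-\mathcal{A}(X_{\alpha,\beta})\|_2\ge\|\eta\|_2$, then $$\sum_{r=1}^R\|u^r_{\alpha,\beta}\|_2^2\le C_{2,1}\sqrt[3]{\beta^2/\alpha^2}\sum_{r=1}^R(\|\hat u^r\|_2\|\hat v^r\|_1)^{2/3},\qquad \sum_{r=1}^R\|v^r_{\alpha,\beta}\|_1\le C_{2,1}\sqrt[3]{\alpha/\beta}\sum_{r=1}^R(\|\hat u^r\|_2\|\hat v^r\|_1)^{2/3},$$ and $$\sum_{r=1}^R(\|u^r_{\alpha,\beta}\|_2\|v^r_{\alpha,\beta}\|_1)^{2/3}\le\sum_{r=1}^R(\|\hat u^r\|_2\|\hat v^r\|_1)^{2/3}.$$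
   Context: For $y\in\mathbb{R}^m$ and $\alpha,\beta>0$, the functional $J^R_{\alpha,\beta}:(\mathbb{R}^{n_1})^R\times(\mathbb{R}^{n_2})^R\to\mathbb{R}$ is $$J^R_{\alpha,\beta}(u^1,\dots,u^R,v^1,\dots,v^R)=\Big\|y-\mathcal{A}\Big(\sum_{r=1}^Ru^r(v^r)^T\Big)\Big\|_2^2+\alpha\sum_{r=1}^R\|u^r\|_2^2+\beta\sum_{r=1}^R\|v^r\|_1.$$ The constant is $C_{2,1}=(1/2)^{2/3}+2^{1/3}$. *)

From Stdlib Require Import Reals Lra.
Open Scope R_scope.

Fixpoint rsum (n : nat) (f : nat -> R) : R :=
  match n with O => 0 | S k => rsum k f + f k end.

(* vectors in R^n are functions nat -> R, only indices < n matter *)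
Definition norm2 (n : nat) (u : nat -> R) : R := sqrt (rsum n (fun i => u i ^ 2)).
Definition norm1 (n : nat) (v : nat -> R) : R := rsum n (fun j => Rabs (v j)).

(* the linear map A : R^{n1 x n2} -> R^m given by its coefficients a k i j *)
Definition Amap (n1 n2 : nat) (a : nat -> nat -> nat -> R) (X : nat -> nat -> R)
  : nat -> R := fun k => rsum n1 (fun i => rsum n2 (fun j => a k i j * X i j)).

(* sum_{r<R} u^r (v^r)^T, with U r = u^r, V r = v^r *)
Definition lowrank (Rk : nat) (U V : nat -> nat -> R) : nat -> nat -> R :=
  fun i j => rsum Rk (fun r => U r i * V r j).

Definition Jfun (m n1 n2 Rk : nat) (a : nat -> nat -> nat -> R) (y : nat -> R)
  (alpha beta : R) (U V : nat -> nat -> R) : R :=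
  (norm2 m (fun k => y k - Amap n1 n2 a (lowrank Rk U V) k)) ^ 2
  + alpha * rsum Rk (fun r => (norm2 n1 (U r)) ^ 2)
  + beta * rsum Rk (fun r => norm1 n2 (V r)).

Definition pow23 (x : R) : R := if Rle_dec x 0 then 0 else Rpower x (2/3).

Definition C21 : R := Rpower (1/2) (2/3) + Rpower 2 (1/3).

(* For a single rank-one term, rescaling u -> t u, v -> v / t leaves u v^T unchanged, and by the
   AM-GM inequality 3 X Y^2 <= X^3 + 2 Y^3 the penalty alpha |u|_2^2 + beta |v|_1 is at least
   C21 alpha^(1/3) beta^(2/3) (|u|_2 |v|_1)^(2/3), with equality for the optimal t. Hence the
   penalty of any factorization dominates this multiple of sum_r (|u^r|_2 |v^r|_1)^(2/3), while
   the true factorization, optimally rescaled, attains it. A minimizer whose residual is at least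
   |eta|_2 cannot have a larger penalty than the rescaled truth, whose residual is exactly eta;
   comparing the two bounds gives the three estimates. *)
From Stdlib Require Import Reals Lra Lia.
Open Scope R_scope.

Lemma rsum_ext n f g : (forall i, (i < n)%nat -> f i = g i) -> rsum n f = rsum n g.
Proof.
induction n as [|n IH]; intros Hfg; simpl; [reflexivity|].
rewrite IH by (intros; apply Hfg; lia). rewrite Hfg by lia. reflexivity.
Qed.

Lemma rsum_le n f g : (forall i, (i < n)%nat -> f i <= g i) -> rsum n f <= rsum n g.
Proof.
induction n as [|n IH]; intros Hfg; simpl; [lra|].
assert (f n <= g n) by (apply Hfg; lia).
assert (rsum n f <= rsum n g) by (apply IH; intros; apply Hfg; lia).
lra.
Qed.

Lemma rsum_plus n f g : rsum n (fun i => f i + g i) = rsum n f + rsum n g.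
Proof. induction n as [|n IH]; simpl; [lra|]. rewrite IH; ring. Qed.

Lemma rsum_mult_l n c f : rsum n (fun i => c * f i) = c * rsum n f.
Proof. induction n as [|n IH]; simpl; [lra|]. rewrite IH; ring. Qed.

Lemma rsum_nonneg n f : (forall i, (i < n)%nat -> 0 <= f i) -> 0 <= rsum n f.
Proof.
induction n as [|n IH]; intros Hf; simpl; [lra|].
assert (0 <= f n) by (apply Hf; lia).
assert (0 <= rsum n f) by (apply IH; intros; apply Hf; lia).
lra.
Qed.

Lemma rsum_term_le n f i :
  (forall k, (k < n)%nat -> 0 <= f k) -> (i < n)%nat -> f i <= rsum n f.
Proof.
induction n as [|n IH]; intros Hf Hi; simpl; [lia|].
assert (0 <= rsum n f) by (apply rsum_nonneg; intros; apply Hf; lia).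
destruct (Nat.eq_dec i n) as [->|Hin]; [lra|].
assert (f i <= rsum n f) by (apply IH; [intros; apply Hf|]; lia).
assert (0 <= f n) by (apply Hf; lia).
lra.
Qed.

Lemma norm2_ge0 n u : 0 <= norm2 n u.
Proof. apply sqrt_pos. Qed.

Lemma norm1_ge0 n v : 0 <= norm1 n v.
Proof. apply rsum_nonneg; intros; apply Rabs_pos. Qed.

Lemma norm2_sqr n u : norm2 n u ^ 2 = rsum n (fun i => u i ^ 2).
Proof. apply pow2_sqrt, rsum_nonneg; intros; apply pow2_ge_0. Qed.

Lemma norm2_scal n t u : norm2 n (fun i => t * u i) ^ 2 = t ^ 2 * norm2 n u ^ 2.
Proof. rewrite !norm2_sqr, <- rsum_mult_l. apply rsum_ext; intros; ring. Qed.

Lemma norm1_scal n v s : norm1 n (fun j => v j * s) = norm1 n v * Rabs s.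
Proof.
unfold norm1. rewrite Rmult_comm, <- rsum_mult_l.
apply rsum_ext; intros; rewrite Rabs_mult; ring.
Qed.

Lemma norm2_eq0 n u i : norm2 n u = 0 -> (i < n)%nat -> u i = 0.
Proof.
intros Hu Hi.
assert (u i ^ 2 <= 0).
{ replace 0 with (norm2 n u ^ 2) by (rewrite Hu; ring). rewrite norm2_sqr.
  apply (rsum_term_le n (fun k => u k ^ 2)); [intros; apply pow2_ge_0 | exact Hi]. }
nra.
Qed.

Lemma norm1_eq0 n v j : norm1 n v = 0 -> (j < n)%nat -> v j = 0.
Proof.
intros Hv Hj.
assert (Rabs (v j) <= 0).
{ rewrite <- Hv. apply (rsum_term_le n (fun k => Rabs (v k))); [intros; apply Rabs_pos | exact Hj]. }
unfold Rabs in *; destruct Rcase_abs; lra.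
Qed.

Definition cbrt (x : R) : R := if Rle_dec x 0 then 0 else Rpower x (1/3).

Lemma cbrt_ge0 x : 0 <= cbrt x.
Proof. unfold cbrt; destruct Rle_dec; [lra|]. left; apply exp_pos. Qed.

Lemma cbrt_gt0 x : 0 < x -> 0 < cbrt x.
Proof. intros; unfold cbrt; destruct Rle_dec; [lra|]. apply exp_pos. Qed.

Lemma pow_cbrt x : 0 <= x -> cbrt x ^ 3 = x.
Proof.
intros Hx; unfold cbrt; destruct Rle_dec; [simpl; lra|].
rewrite <- Rpower_pow by apply exp_pos.
rewrite Rpower_mult. replace (1/3 * INR 3) with 1 by (simpl; field).
apply Rpower_1; lra.
Qed.

Lemma cube_inj a b : 0 <= a -> 0 <= b -> a ^ 3 = b ^ 3 -> a = b.
Proof.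
intros Ha Hb Hab.
assert (Hfac : (a - b) * (a ^ 2 + a * b + b ^ 2) = 0) by (rewrite Rmult_comm; nra).
destruct (Rmult_integral _ _ Hfac); nra.
Qed.

Lemma cbrt_unique x z : 0 <= z -> z ^ 3 = x -> cbrt x = z.
Proof.
intros Hz Hx. apply cube_inj; [apply cbrt_ge0 | exact Hz |].
rewrite pow_cbrt; [exact (eq_sym Hx) | rewrite <- Hx; apply pow_le, Hz].
Qed.

Lemma cbrt_mult x y : 0 <= x -> 0 <= y -> cbrt (x * y) = cbrt x * cbrt y.
Proof.
intros Hx Hy. apply cbrt_unique.
- apply Rmult_le_pos; apply cbrt_ge0.
- rewrite Rpow_mult_distr, !pow_cbrt; auto.
Qed.

Lemma pow23_cbrt x : 0 <= x -> pow23 x = cbrt x ^ 2.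
Proof.
intros Hx; unfold pow23, cbrt; destruct Rle_dec; [ring|].
replace (2/3) with (1/3 + 1/3) by field. rewrite Rpower_plus; ring.
Qed.

Lemma Rpower_third x z : 0 < x -> 0 <= z -> z ^ 3 = x -> Rpower x (1/3) = z.
Proof.
intros Hx Hz Hzx. rewrite <- (cbrt_unique x z Hz Hzx).
unfold cbrt; destruct Rle_dec; [lra | reflexivity].
Qed.

Lemma C21_cbrt : C21 = 3 / cbrt 2 ^ 2.
Proof.
set (w := cbrt 2).
assert (Hw : 0 < w) by (apply cbrt_gt0; lra).
assert (Hw3 : w ^ 3 = 2) by (apply pow_cbrt; lra).
assert (Hhalf : Rpower (1/2) (2/3) = (1 / w) ^ 2).
{ replace (Rpower (1/2) (2/3)) with (pow23 (1/2))
    by (unfold pow23; destruct Rle_dec; [lra | reflexivity]).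
  rewrite pow23_cbrt by lra. f_equal. apply cbrt_unique.
  - left; apply Rdiv_lt_0_compat; lra.
  - replace ((1 / w) ^ 3) with (1 / w ^ 3) by (field; lra). rewrite Hw3; reflexivity. }
unfold C21. rewrite Hhalf, (Rpower_third 2 w) by lra.
replace 3 with (1 + w ^ 3) by lra. field; lra.
Qed.

Lemma amgm_cube_sqr X Y : 0 <= X -> 0 <= Y -> 3 * X * Y ^ 2 <= X ^ 3 + 2 * Y ^ 3.
Proof.
intros HX HY.
assert (0 <= (X - Y) ^ 2 * (X + 2 * Y)) by (apply Rmult_le_pos; [apply pow2_ge_0 | lra]).
nra.
Qed.

(* The value of min_t (alpha (t x)^2 + beta b / t) divided by (x b)^(2/3). *)
Definition penalty_const (alpha beta : R) : R := C21 * cbrt alpha * cbrt beta ^ 2.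

(* The minimizer t of alpha (t x)^2 + beta b / t solves 2 alpha x^2 t^3 = beta b. *)
Definition balance_factor (alpha beta x b : R) : R := cbrt (beta * b / (2 * alpha * x ^ 2)).

Definition penalty (n1 n2 Rk : nat) (alpha beta : R) (U V : nat -> nat -> R) : R :=
  alpha * rsum Rk (fun r => norm2 n1 (U r) ^ 2) + beta * rsum Rk (fun r => norm1 n2 (V r)).

Section Penalty.

Variables alpha beta : R.
Hypothesis alpha_gt0 : 0 < alpha.
Hypothesis beta_gt0 : 0 < beta.

Let g := cbrt alpha.
Let h := cbrt beta.
Let w := cbrt 2.

Let g_gt0 : 0 < g. Proof. apply cbrt_gt0; lra. Qed.
Let h_gt0 : 0 < h. Proof. apply cbrt_gt0; lra. Qed.
Let w_gt0 : 0 < w. Proof. apply cbrt_gt0; lra. Qed.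
Let alpha_cube : alpha = g ^ 3. Proof. symmetry; apply pow_cbrt; lra. Qed.
Let beta_cube : beta = h ^ 3. Proof. symmetry; apply pow_cbrt; lra. Qed.
Let w_cube : w ^ 3 = 2. Proof. apply pow_cbrt; lra. Qed.
Let penalty_constE : penalty_const alpha beta = 3 * g * h ^ 2 / w ^ 2.
Proof. unfold penalty_const; rewrite C21_cbrt; fold w g h; field; lra. Qed.

Lemma penalty_const_gt0 : 0 < penalty_const alpha beta.
Proof.
rewrite penalty_constE. apply Rdiv_lt_0_compat; [|apply pow_lt; lra].
apply Rmult_lt_0_compat; [lra | apply pow_lt; lra].
Qed.

Lemma rank_one_penalty_lower x b : 0 <= x -> 0 <= b ->
  penalty_const alpha beta * pow23 (x * b) <= alpha * x ^ 2 + beta * b.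
Proof.
intros Hx Hb.
rewrite pow23_cbrt, cbrt_mult by nra.
rewrite <- (pow_cbrt x Hx) at 2. rewrite <- (pow_cbrt b Hb) at 2.
pose proof (cbrt_ge0 x). pose proof (cbrt_ge0 b).
pose proof (amgm_cube_sqr (g * cbrt x ^ 2) (h * cbrt b / w)) as Hamgm.
replace (alpha * (cbrt x ^ 3) ^ 2 + beta * cbrt b ^ 3)
  with ((g * cbrt x ^ 2) ^ 3 + 2 * (h * cbrt b / w) ^ 3)
  by (rewrite alpha_cube, beta_cube, <- w_cube; field; lra).
replace (penalty_const alpha beta * (cbrt x * cbrt b) ^ 2)
  with (3 * (g * cbrt x ^ 2) * (h * cbrt b / w) ^ 2)
  by (rewrite penalty_constE; field; lra).
apply Hamgm; [nra|]. unfold Rdiv; apply Rmult_le_pos; [nra | left; apply Rinv_0_lt_compat; lra].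
Qed.

Lemma balance_factorE x b : 0 < x -> 0 < b ->
  balance_factor alpha beta x b = h * cbrt b / (w * g * cbrt x ^ 2).
Proof.
intros Hx Hb. unfold balance_factor.
assert (Ex : x = cbrt x ^ 3) by (rewrite pow_cbrt; lra).
assert (Eb : b = cbrt b ^ 3) by (rewrite pow_cbrt; lra).
pose proof (cbrt_gt0 x Hx). pose proof (cbrt_gt0 b Hb).
set (a := cbrt x) in *. set (c := cbrt b) in *. clearbody a c. subst x b.
apply cbrt_unique.
- left; apply Rdiv_lt_0_compat; [nra | apply Rmult_lt_0_compat; nra].
- rewrite alpha_cube, beta_cube, <- w_cube. field; repeat split; lra.
Qed.

Lemma rank_one_penalty_balanced x b : 0 < x -> 0 < b ->
  let t := balance_factor alpha beta x b in
  alpha * (t * x) ^ 2 + beta * (b / t) = penalty_const alpha beta * pow23 (x * b).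
Proof.
intros Hx Hb t. unfold t; rewrite balance_factorE by lra.
rewrite pow23_cbrt, cbrt_mult, penalty_constE by nra.
assert (Ex : x = cbrt x ^ 3) by (rewrite pow_cbrt; lra).
assert (Eb : b = cbrt b ^ 3) by (rewrite pow_cbrt; lra).
pose proof (cbrt_gt0 x Hx). pose proof (cbrt_gt0 b Hb).
set (a := cbrt x) in *. set (c := cbrt b) in *. clearbody a c. subst x b.
rewrite alpha_cube, beta_cube.
replace 3 with (1 + w ^ 3) by lra.
field; repeat split; lra.
Qed.

Lemma rank_one_rescale n1 n2 (u v : nat -> R) :
  let t := balance_factor alpha beta (norm2 n1 u) (norm1 n2 v) in
  (forall i j, (i < n1)%nat -> (j < n2)%nat -> t * u i * (v j / t) = u i * v j) /\
  alpha * norm2 n1 (fun i => t * u i) ^ 2 + beta * norm1 n2 (fun j => v j / t)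
    <= penalty_const alpha beta * pow23 (norm2 n1 u * norm1 n2 v).
Proof.
intros t. unfold Rdiv at 2. rewrite norm2_scal, norm1_scal.
pose proof (norm2_ge0 n1 u). pose proof (norm1_ge0 n2 v).
destruct (Rlt_dec 0 (norm2 n1 u)) as [Hu|Hu]; [destruct (Rlt_dec 0 (norm1 n2 v)) as [Hv|Hv]|].
- assert (Ht : 0 < t).
  { unfold t; rewrite balance_factorE by lra.
    pose proof (cbrt_gt0 _ Hu). pose proof (cbrt_gt0 _ Hv).
    apply Rdiv_lt_0_compat; [nra | apply Rmult_lt_0_compat; nra]. }
  split.
  + intros i j _ _. field; lra.
  + rewrite Rabs_right by (left; apply Rinv_0_lt_compat, Ht).
    right. rewrite <- (rank_one_penalty_balanced _ _ Hu Hv). fold t. unfold Rdiv; ring.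
  (* In the degenerate cases u v^T = 0 on the index range and, using / 0 = 0, t = 0. *)
- assert (Hv0 : norm1 n2 v = 0) by lra.
  assert (Ht : t = 0).
  { unfold t, balance_factor. rewrite Hv0, Rmult_0_r, Rdiv_0_l.
    unfold cbrt; destruct Rle_dec; lra. }
  split.
  + intros i j _ Hj. rewrite (norm1_eq0 n2 v j Hv0 Hj). unfold Rdiv; ring.
  + rewrite Ht, Rinv_0, Rabs_R0, Hv0, Rmult_0_r, pow23_cbrt by lra.
    pose proof penalty_const_gt0. simpl; nra.
- assert (Hu0 : norm2 n1 u = 0) by lra.
  assert (Ht : t = 0).
  { unfold t, balance_factor. rewrite Hu0, pow_i, Rmult_0_r, Rdiv_0_r by lia.
    unfold cbrt; destruct Rle_dec; lra. }
  split.
  + intros i j Hi _. rewrite (norm2_eq0 n1 u i Hu0 Hi). ring.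
  + rewrite Ht, Rinv_0, Rabs_R0, Hu0, Rmult_0_l, pow23_cbrt by lra.
    pose proof penalty_const_gt0. simpl; nra.
Qed.

Lemma penalty_lower n1 n2 Rk U V :
  penalty_const alpha beta * rsum Rk (fun r => pow23 (norm2 n1 (U r) * norm1 n2 (V r)))
    <= penalty n1 n2 Rk alpha beta U V.
Proof.
unfold penalty. rewrite <- !rsum_mult_l, <- rsum_plus.
apply rsum_le; intros r _.
apply rank_one_penalty_lower; [apply norm2_ge0 | apply norm1_ge0].
Qed.

Lemma balanced_factorization n1 n2 Rk (U V : nat -> nat -> R) :
  exists (U' V' : nat -> nat -> R),
    (forall i j, (i < n1)%nat -> (j < n2)%nat -> lowrank Rk U' V' i j = lowrank Rk U V i j) /\
    penalty n1 n2 Rk alpha beta U' V'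
      <= penalty_const alpha beta * rsum Rk (fun r => pow23 (norm2 n1 (U r) * norm1 n2 (V r))).
Proof.
set (t r := balance_factor alpha beta (norm2 n1 (U r)) (norm1 n2 (V r))).
exists (fun r i => t r * U r i), (fun r j => V r j / t r). split.
- intros i j Hi Hj. apply rsum_ext; intros r _.
  apply (rank_one_rescale n1 n2 (U r) (V r)); assumption.
- unfold penalty. rewrite <- !rsum_mult_l, <- rsum_plus.
  apply rsum_le; intros r _. apply (rank_one_rescale n1 n2 (U r) (V r)).
Qed.

Lemma rsum_norm2_sqr_le_of_penalty n1 n2 Rk U V B :
  penalty n1 n2 Rk alpha beta U V <= penalty_const alpha beta * B ->
  rsum Rk (fun r => norm2 n1 (U r) ^ 2) <= C21 * Rpower (beta ^ 2 / alpha ^ 2) (1/3) * B.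
Proof.
unfold penalty; intros Hpen.
assert (0 <= beta * rsum Rk (fun r => norm1 n2 (V r)))
  by (apply Rmult_le_pos; [lra | apply rsum_nonneg; intros; apply norm1_ge0]).
rewrite (Rpower_third _ (h ^ 2 / g ^ 2)).
- apply Rmult_le_reg_l with alpha; [lra|].
  replace (alpha * (C21 * (h ^ 2 / g ^ 2) * B)) with (penalty_const alpha beta * B)
    by (unfold penalty_const; fold g h; rewrite alpha_cube; field; lra).
  lra.
- apply Rdiv_lt_0_compat; nra.
- left; apply Rdiv_lt_0_compat; nra.
- rewrite alpha_cube, beta_cube; field; lra.
Qed.

Lemma rsum_norm1_le_of_penalty n1 n2 Rk U V B :
  penalty n1 n2 Rk alpha beta U V <= penalty_const alpha beta * B ->
  rsum Rk (fun r => norm1 n2 (V r)) <= C21 * Rpower (alpha / beta) (1/3) * B.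
Proof.
unfold penalty; intros Hpen.
assert (0 <= alpha * rsum Rk (fun r => norm2 n1 (U r) ^ 2))
  by (apply Rmult_le_pos; [lra | apply rsum_nonneg; intros; apply pow2_ge_0]).
rewrite (Rpower_third _ (g / h)).
- apply Rmult_le_reg_l with beta; [lra|].
  replace (beta * (C21 * (g / h) * B)) with (penalty_const alpha beta * B)
    by (unfold penalty_const; fold g h; rewrite beta_cube; field; lra).
  lra.
- apply Rdiv_lt_0_compat; lra.
- left; apply Rdiv_lt_0_compat; lra.
- rewrite alpha_cube, beta_cube; field; lra.
Qed.

End Penalty.

Lemma Amap_ext n1 n2 a X X' k :
  (forall i j, (i < n1)%nat -> (j < n2)%nat -> X i j = X' i j) ->
  Amap n1 n2 a X k = Amap n1 n2 a X' k.
Proof.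
intros HX. unfold Amap.
apply rsum_ext; intros i Hi; apply rsum_ext; intros j Hj; rewrite HX; auto.
Qed.

Lemma minimizer_penalty_le m n1 n2 Rk a y eta alpha beta (U V U' V' : nat -> nat -> R) :
  (forall U'' V'', Jfun m n1 n2 Rk a y alpha beta U V <= Jfun m n1 n2 Rk a y alpha beta U'' V'') ->
  (forall k, (k < m)%nat -> y k - Amap n1 n2 a (lowrank Rk U' V') k = eta k) ->
  norm2 m (fun k => y k - Amap n1 n2 a (lowrank Rk U V) k) >= norm2 m eta ->
  penalty n1 n2 Rk alpha beta U V <= penalty n1 n2 Rk alpha beta U' V'.
Proof.
intros Hmin Hfit' Hfit.
specialize (Hmin U' V'). unfold Jfun in Hmin. fold (penalty n1 n2 Rk alpha beta U V) in Hmin.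
replace (norm2 m (fun k => y k - Amap n1 n2 a (lowrank Rk U' V') k)) with (norm2 m eta) in Hmin
  by (unfold norm2; f_equal; apply rsum_ext; intros k Hk; rewrite Hfit' by exact Hk; reflexivity).
unfold penalty in *.
pose proof (norm2_ge0 m eta).
assert (norm2 m eta ^ 2 <= norm2 m (fun k => y k - Amap n1 n2 a (lowrank Rk U V) k) ^ 2)
  by (apply pow_incr; lra).
lra.
Qed.


Theorem mainTheorem3 (m n1 n2 Rk : nat) (a : nat -> nat -> nat -> R)
  (alpha beta : R) (Uh Vh : nat -> nat -> R) (eta y : nat -> R)
  (U V : nat -> nat -> R) :
  (1 <= Rk)%nat -> 0 < alpha -> 0 < beta ->
  (forall k, (k < m)%nat -> y k = Amap n1 n2 a (lowrank Rk Uh Vh) k + eta k) ->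
  (forall U' V' : nat -> nat -> R,
      Jfun m n1 n2 Rk a y alpha beta U V <= Jfun m n1 n2 Rk a y alpha beta U' V') ->
  norm2 m (fun k => y k - Amap n1 n2 a (lowrank Rk U V) k) >= norm2 m eta ->
  rsum Rk (fun r => (norm2 n1 (U r)) ^ 2)
    <= C21 * Rpower (beta ^ 2 / alpha ^ 2) (1/3)
       * rsum Rk (fun r => pow23 (norm2 n1 (Uh r) * norm1 n2 (Vh r)))
  /\ rsum Rk (fun r => norm1 n2 (V r))
    <= C21 * Rpower (alpha / beta) (1/3)
       * rsum Rk (fun r => pow23 (norm2 n1 (Uh r) * norm1 n2 (Vh r)))
  /\ rsum Rk (fun r => pow23 (norm2 n1 (U r) * norm1 n2 (V r)))
    <= rsum Rk (fun r => pow23 (norm2 n1 (Uh r) * norm1 n2 (Vh r))).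
Proof.
intros _ Halpha Hbeta Hy Hmin Hfit.
set (S := rsum Rk (fun r => pow23 (norm2 n1 (Uh r) * norm1 n2 (Vh r)))).
destruct (balanced_factorization alpha beta Halpha Hbeta n1 n2 Rk Uh Vh)
  as (U' & V' & Hlowrank & Hbalanced).
assert (Hupper : penalty n1 n2 Rk alpha beta U V <= penalty_const alpha beta * S).
{ apply Rle_trans with (2 := Hbalanced).
  apply (minimizer_penalty_le m n1 n2 Rk a y eta); [exact Hmin | | exact Hfit].
  intros k Hk. rewrite Hy, (Amap_ext n1 n2 a _ _ k Hlowrank) by exact Hk. ring. }
split; [|split].
- exact (rsum_norm2_sqr_le_of_penalty alpha beta Halpha Hbeta n1 n2 Rk U V S Hupper).
- exact (rsum_norm1_le_of_penalty alpha beta Halpha Hbeta n1 n2 Rk U V S Hupper).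
- apply Rmult_le_reg_l with (penalty_const alpha beta).
  + exact (penalty_const_gt0 alpha beta Halpha Hbeta).
  + exact (Rle_trans _ _ _ (penalty_lower alpha beta Halpha Hbeta n1 n2 Rk U V) Hupper).
Qed.
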